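(* Let $(X,\beta)$ be a locally finite prechart. For all $x,y\in X$, $\mathsf{bd}_\beta(x,y)=\inf_{i\in\mathbb{N}}\Phi^{(i)}_\beta(x,y)$, where $\Phi^{(0)}_\beta$ is the discrete pseudometric on $X$ and $\Phi^{(i+1)}_\beta=\Phi_\beta(\Phi^{(i)}_\beta)$.
   Context: Fix a set $V=\{v_1,v_2,\dots\}$ of variables and a set $\Sigma$ of letters. A prechart is a pair $(X,\beta)$ with $\beta:X\to P_{\mathrm{fin}}(\Sigma\times X+V)$; write $x\xrightarrow{a}x'$ iff $(a,x')\in\beta(x)$. It is locally finite if from each state only finitely many states are reachable by transitions. A 1-bounded pseudometric on $X$ is $d:X\times X\to[0,1]$ with $d(x,x)=0$, symmetry and triangle inequality; $D_X$ is the set of these, ordered pointwise. The discrete pseudometric is $\top(x,y)=0$ if $x=y$ and $1$ otherwise. For $d\in D_X$, $d^\uparrow$ on $\Sigma\times X+V$ is $d^\uparrow((a,x),(a,y))=\tfrac12 d(x,y)$, $d^\uparrow(m,n)=0$ if $m=n$, $1$ otherwise. $\mathcal H(d)(A,B)=\max\{\sup_{x\in A}\inf_{y\in B}d(x,y),\sup_{y\in B}\inf_{x\in A}d(y,x)\}$ with $\sup\emptyset=0$, $\inf\emptyset=1$. $\Phi_\beta(d)(x,y)=\mathcal H(d^\uparrow)(\beta(x),\beta(y))$, a monotone map on $D_X$; $\mathsf{bd}_\beta$ is its least fixpoint. *)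

From mathcomp Require Import all_boot all_order all_algebra.
From mathcomp Require Import all_classical all_reals.
From Stdlib Require List.
Set Implicit Arguments. Unset Strict Implicit. Unset Printing Implicit Defensive.
Import Order.TTheory GRing.Theory Num.Theory.
Local Open Scope classical_set_scope.
Local Open Scope ring_scope.

(* Variables V = {v_1, v_2, ...} are represented by nat.
   A prechart: beta : X -> P_fin(Sigma * X + V); finite sets as lists. *)
Definition prechart (Sigma X : Type) := X -> seq ((Sigma * X) + nat).

Definition step (Sigma X : Type) (beta : prechart Sigma X) (x x' : X) : Prop :=
  exists a : Sigma, List.In (inl (a, x')) (beta x).

Inductive reach (Sigma X : Type) (beta : prechart Sigma X) : X -> X -> Prop :=
| reach_refl x : reach beta x x
| reach_step x y z : step beta x y -> reach beta y z -> reach beta x z.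

Definition locally_finite (Sigma X : Type) (beta : prechart Sigma X) : Prop :=
  forall x : X, finite_set [set y | reach beta x y].

Definition is_pmetric (R : realType) (X : Type) (d : X -> X -> R) : Prop :=
  [/\ forall x y, 0 <= d x y <= 1,
      forall x, d x x = 0,
      forall x y, d x y = d y x &
      forall x y z, d x z <= d x y + d y z].

Definition discrete_pm (R : realType) (X : Type) : X -> X -> R :=
  fun x y => if pselect (x = y) then 0 else 1.

Definition lift_pm (R : realType) (Sigma X : Type) (d : X -> X -> R)
    (m n : (Sigma * X) + nat) : R :=
  match m, n with
  | inl (a, x), inl (b, y) => if pselect (a = b) then d x y / 2 else 1
  | inr v, inr w => if pselect (v = w) then 0 else 1
  | _, _ => 1
  end.

(* Hausdorff lifting on finite sets (lists), sup of empty = 0, inf of empty = 1 *)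
Definition hausdorff (R : realType) (T : Type) (e : T -> T -> R)
    (A B : seq T) : R :=
  Num.max (\big[Num.max/0]_(a <- A) \big[Num.min/1]_(b <- B) e a b)
          (\big[Num.max/0]_(b <- B) \big[Num.min/1]_(a <- A) e b a).

Definition Phi (R : realType) (Sigma X : Type) (beta : prechart Sigma X)
    (d : X -> X -> R) : X -> X -> R :=
  fun x y => hausdorff (lift_pm d) (beta x) (beta y).

Definition Phi_iter (R : realType) (Sigma X : Type) (beta : prechart Sigma X)
    (i : nat) : X -> X -> R :=
  iter i (Phi beta) (@discrete_pm R X).

Definition is_bd (R : realType) (Sigma X : Type) (beta : prechart Sigma X)
    (d : X -> X -> R) : Prop :=
  [/\ is_pmetric d, Phi beta d = d &
      forall d' : X -> X -> R, is_pmetric d' -> Phi beta d' = d' ->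
        forall x y, d x y <= d' x y].

From mathcomp Require Import all_boot all_order all_algebra.
From mathcomp Require Import all_classical all_reals.
From mathcomp Require Import lra.
Set Implicit Arguments. Unset Strict Implicit. Unset Printing Implicit Defensive.
Import Order.TTheory GRing.Theory Num.Theory.
Local Open Scope ring_scope.

(* The lifting d^up halves the distance between successors, so Phi_beta is a
   1/2-contraction for the sup distance between pseudometrics:
   |Phi d - Phi d'| <= 1/2 sup |d - d'|.  Hence Phi_beta has at most one
   fixpoint in D_X, and the iterates Phi^(i), which decrease from the discrete
   pseudometric, satisfy |Phi^(j) - Phi^(i)| <= 2^-i for i <= j.  Their
   pointwise infimum is therefore within 2^-i of Phi^(i); this makes it a
   pseudometric fixed by Phi_beta, i.e. the unique fixpoint bd_beta. *)

Section RealFacts.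
Variable R : realType.
Implicit Types a b c d k : R.

Lemma ler_dist_max a b c d k : `|a - c| <= k -> `|b - d| <= k ->
  `|Num.max a b - Num.max c d| <= k.
Proof.
rewrite !ler_distl => /andP[? ?] /andP[? ?].
by have [] := leP a b; have [] := leP c d; move=> *; apply/andP; split; lra.
Qed.

Lemma ler_dist_min a b c d k : `|a - c| <= k -> `|b - d| <= k ->
  `|Num.min a b - Num.min c d| <= k.
Proof.
rewrite !ler_distl => /andP[? ?] /andP[? ?].
by have [] := leP a b; have [] := leP c d; move=> *; apply/andP; split; lra.
Qed.

Lemma le_of_le_addr_pow2 a b c : (forall n, a <= b + c / 2 ^+ n) -> a <= b.
Proof.
move=> h; rewrite leNgt; apply/negP => ltba.
have ab0 : 0 < a - b by rewrite subr_gt0.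
set n := Num.bound (`|c| / (a - b)).
have lt_c_n : `|c| / (a - b) < n%:R by apply: archi_boundP; rewrite divr_ge0 // ltW.
have lt_n_2n : (n%:R : R) < 2 ^+ n by rewrite -natrX ltr_nat ltn_expl.
have t0 : 0 < (2 : R) ^+ n by rewrite exprn_gt0.
have : c / 2 ^+ n < a - b.
  rewrite ltr_pdivrMr // (le_lt_trans (ler_norm c)) // -ltr_pdivrMl //.
  by rewrite mulrC (lt_trans lt_c_n).
by have := h n; lra.
Qed.

Lemma eq_of_dist_le_pow2 a b c : (forall n, `|a - b| <= c / 2 ^+ n) -> a = b.
Proof.
move=> h; apply/eqP; rewrite eq_le.
by apply/andP; split; apply: (le_of_le_addr_pow2 (c := c)) => n;
  have := h n; rewrite ler_distl => /andP[? ?]; lra.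
Qed.

End RealFacts.

Section PseudoMetric.
Variables (R : realType) (T : Type) (d : T -> T -> R).
Hypothesis dP : is_pmetric d.

Lemma pmetric_ge0 x y : 0 <= d x y.
Proof. by case: dP => /(_ x y)/andP[]. Qed.

Lemma pmetric_le1 x y : d x y <= 1.
Proof. by case: dP => /(_ x y)/andP[]. Qed.

End PseudoMetric.

Lemma pmetric_dist_le1 (R : realType) (T : Type) (d d' : T -> T -> R) :
  is_pmetric d -> is_pmetric d' -> forall x y, `|d x y - d' x y| <= 1.
Proof.
move=> dP d'P x y; rewrite ler_distl.
have := pmetric_ge0 dP x y; have := pmetric_le1 dP x y.
have := pmetric_ge0 d'P x y; have := pmetric_le1 d'P x y.
by move=> *; apply/andP; split; lra.
Qed.

Section Hausdorff.
Variables (R : realType) (T : Type).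
Implicit Types (e : T -> T -> R) (A B C : seq T).

Lemma ge_bigmin_In (f : T -> R) x0 r t : List.In t r ->
  \big[Num.min/x0]_(s <- r) f s <= f t.
Proof.
elim: r => //= s r IH [<-|/IH le_ft]; rewrite big_cons ge_min ?lexx //.
by rewrite le_ft orbT.
Qed.

Lemma le_bigmax_In (f : T -> R) x0 r t : List.In t r ->
  f t <= \big[Num.max/x0]_(s <- r) f s.
Proof.
elim: r => //= s r IH [<-|/IH le_ft]; rewrite big_cons le_max ?lexx //.
by rewrite le_ft orbT.
Qed.

Lemma bigmax_le_In (f : T -> R) x0 x r : x0 <= x ->
  (forall t, List.In t r -> f t <= x) -> \big[Num.max/x0]_(s <- r) f s <= x.
Proof.
move=> x0x; elim: r => [|s r IH] le_fx; rewrite ?big_nil ?big_cons // ge_max.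
by rewrite le_fx /= ?IH // => [t rt|]; [apply: le_fx; right | left].
Qed.

Lemma le_bigmin_In (f : T -> R) x0 x r : x <= x0 ->
  (forall t, List.In t r -> x <= f t) -> x <= \big[Num.min/x0]_(s <- r) f s.
Proof.
move=> xx0; elim: r => [|s r IH] le_xf; rewrite ?big_nil ?big_cons // le_min.
by rewrite le_xf /= ?IH // => [t rt|]; [apply: le_xf; right | left].
Qed.

Definition dhausdorff e A B : R :=
  \big[Num.max/0]_(a <- A) \big[Num.min/1]_(b <- B) e a b.

Lemma hausdorffE e A B :
  hausdorff e A B = Num.max (dhausdorff e A B) (dhausdorff e B A).
Proof. by []. Qed.

Lemma dhausdorff_ge0 e A B : 0 <= dhausdorff e A B.
Proof. exact: bigmax_ge_id. Qed.

Lemma dhausdorff_le1 e A B : dhausdorff e A B <= 1.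
Proof. by apply: bigmax_le => // a _; apply: bigmin_le_id. Qed.

Lemma dhausdorff_le e e' A B : (forall a b, e a b <= e' a b) ->
  dhausdorff e A B <= dhausdorff e' A B.
Proof.
move=> le_e; apply: (big_ind2 (fun u v => u <= v)) => // [? ? ? ?|a _].
  exact: le_max2.
by apply: (big_ind2 (fun u v => u <= v)) => // ? ? ? ?; apply: le_min2.
Qed.

Lemma dhausdorff_dist e e' A B (k : R) : 0 <= k ->
  (forall a b, `|e a b - e' a b| <= k) ->
  `|dhausdorff e A B - dhausdorff e' A B| <= k.
Proof.
move=> k0 de; apply: (big_ind2 (fun u v => `|u - v| <= k)) => [|? ? ? ?|a _].
- by rewrite subrr normr0.
- exact: ler_dist_max.
apply: (big_ind2 (fun u v => `|u - v| <= k)) => // [|? ? ? ?].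
- by rewrite subrr normr0.
- exact: ler_dist_min.
Qed.

Lemma dhausdorff_id e A : (forall a, e a a = 0) -> dhausdorff e A A = 0.
Proof.
move=> e0; apply/eqP; rewrite eq_le dhausdorff_ge0 andbT.
by apply: bigmax_le_In => // a aA; rewrite -(e0 a) (ge_bigmin_In (e a)).
Qed.

Lemma dhausdorff_triangle e A B C :
  (forall a b, 0 <= e a b) -> (forall a b c, e a c <= e a b + e b c) ->
  dhausdorff e A C <= dhausdorff e A B + dhausdorff e B C.
Proof.
move=> e_ge0 e_tri; have BC0 := dhausdorff_ge0 e B C.
apply: bigmax_le_In => [|a aA]; first by rewrite addr_ge0 ?dhausdorff_ge0.
set m := \big[Num.min/1]_(c <- C) e a c.
have m1 : m <= 1 by apply: bigmin_le_id.
have le_m_via b : List.In b B -> m - dhausdorff e B C <= e a b.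
  move=> bB.
  have : \big[Num.min/1]_(c <- C) e b c <= dhausdorff e B C.
    exact: (le_bigmax_In (fun b => \big[Num.min/1]_(c <- C) e b c) 0 bB).
  suff : m - e a b <= \big[Num.min/1]_(c <- C) e b c by lra.
  apply: le_bigmin_In => [|c cC]; first by have := e_ge0 a b; lra.
  by have := ge_bigmin_In (e a) 1 cC; have := e_tri a b c; rewrite -/m; lra.
have : m - dhausdorff e B C <= \big[Num.min/1]_(b <- B) e a b.
  by apply: le_bigmin_In => [|b bB]; [lra | exact: le_m_via].
have : \big[Num.min/1]_(b <- B) e a b <= dhausdorff e A B.
  exact: (le_bigmax_In (fun a => \big[Num.min/1]_(b <- B) e a b) 0 aA).
lra.
Qed.

Lemma hausdorff_le e e' A B : (forall a b, e a b <= e' a b) ->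
  hausdorff e A B <= hausdorff e' A B.
Proof. by move=> le_e; rewrite !hausdorffE le_max2 ?dhausdorff_le. Qed.

Lemma hausdorff_dist e e' A B (k : R) : 0 <= k ->
  (forall a b, `|e a b - e' a b| <= k) ->
  `|hausdorff e A B - hausdorff e' A B| <= k.
Proof. by move=> k0 de; rewrite !hausdorffE ler_dist_max ?dhausdorff_dist. Qed.

Lemma hausdorff_pmetric e : is_pmetric e -> is_pmetric (hausdorff e).
Proof.
move=> [e01 e0 eC e_tri].
have e_ge0 a b : 0 <= e a b by have /andP[] := e01 a b.
split=> [A B|A|A B|A B C].
- by rewrite le_max dhausdorff_ge0 ge_max !dhausdorff_le1.
- by rewrite hausdorffE dhausdorff_id // maxxx.
- by rewrite !hausdorffE maxC.
rewrite !hausdorffE ge_max; apply/andP; split.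
  apply: (le_trans (dhausdorff_triangle A B C e_ge0 e_tri)).
  by rewrite lerD // le_max lexx ?orbT.
rewrite addrC; apply: (le_trans (dhausdorff_triangle C B A e_ge0 e_tri)).
by rewrite lerD // le_max lexx ?orbT.
Qed.

End Hausdorff.

Lemma is_pmetric_comap (R : realType) (X Y : Type) (f : X -> Y) (e : Y -> Y -> R) :
  is_pmetric e -> is_pmetric (fun x y => e (f x) (f y)).
Proof.
by move=> [e01 e0 eC e_tri]; split=> *; [exact: e01 | exact: e0 | exact: eC | exact: e_tri].
Qed.

Section Lift.
Variables (R : realType) (Sigma X : Type).
Implicit Types (d : X -> X -> R) (m n : (Sigma * X) + nat).

Lemma lift_pm_le d d' : (forall x y, d x y <= d' x y) ->
  forall m n, lift_pm d m n <= lift_pm d' m n.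
Proof.
move=> le_d [[a x]|v] [[b y]|w] //=; case: pselect => //= _.
by rewrite ler_pM2r ?invr_gt0 ?le_d.
Qed.

Lemma lift_pm_dist d d' (k : R) : 0 <= k -> (forall x y, `|d x y - d' x y| <= k) ->
  forall m n, `|lift_pm d m n - lift_pm d' m n| <= k / 2.
Proof.
move=> k0 de [[a x]|v] [[b y]|w] /=; try case: pselect => _ /=;
  rewrite ?subrr ?normr0 ?divr_ge0 //.
by rewrite -mulrBl normrM (ger0_norm (x := 2^-1)) ?invr_ge0 // ler_pM2r ?invr_gt0.
Qed.

Lemma lift_pmetric d : is_pmetric d -> is_pmetric (lift_pm (Sigma := Sigma) d).
Proof.
move=> [d01 d0 dC d_tri].
have lift01 m n : 0 <= lift_pm d m n <= 1.
  case: m n => [[a x]|v] [[b y]|w] /=; try case: pselect => ? /=; rewrite ?lexx ?ler01 //.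
  by have /andP[? ?] := d01 x y; apply/andP; split; lra.
split=> //.
- by move=> [[a x]|v] /=; case: pselect => // ?; rewrite d0 mul0r.
- move=> [[a x]|v] [[b y]|w] //=; repeat (case: pselect => ? /=; subst);
    by [rewrite dC | congruence].
(* A step of cost 1 already dominates the left-hand side; otherwise all three
   points carry the same label, resp. the same variable. *)
move=> m n p; have [mn1|mn1] := eqVneq (lift_pm d m n) 1.
  by have := lift01 m p; have := lift01 n p; rewrite mn1 => /andP[? ?] /andP[? ?]; lra.
have [np1|np1] := eqVneq (lift_pm d n p) 1.
  by have := lift01 m p; have := lift01 m n; rewrite np1 => /andP[? ?] /andP[? ?]; lra.
move: m n p mn1 np1 => [[a x]|v] [[b y]|w] [[c z]|u] //=; rewrite ?eqxx //.
all: do 2 (case: pselect => ? /=; rewrite ?eqxx // => _); subst.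
all: case: pselect => [_ /= | /(_ erefl)[]].
  by have := d_tri x y z; lra.
by rewrite addr0.
Qed.

End Lift.

Section Iteration.
Variables (R : realType) (Sigma X : Type) (beta : prechart Sigma X).
Implicit Types (d : X -> X -> R) (k : R).
Local Notation Pi := (@Phi_iter R Sigma X beta).

Lemma Phi_pmetric d : is_pmetric d -> is_pmetric (Phi beta d).
Proof. by move=> dP; apply/(is_pmetric_comap beta)/hausdorff_pmetric/lift_pmetric. Qed.

Lemma Phi_le d d' : (forall x y, d x y <= d' x y) ->
  forall x y, Phi beta d x y <= Phi beta d' x y.
Proof. by move=> le_d x y; apply/hausdorff_le/lift_pm_le. Qed.

Lemma Phi_dist d d' k : 0 <= k -> (forall x y, `|d x y - d' x y| <= k) ->
  forall x y, `|Phi beta d x y - Phi beta d' x y| <= k / 2.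
Proof.
by move=> k0 dd x y; apply: hausdorff_dist; [rewrite divr_ge0 | exact: lift_pm_dist].
Qed.

Lemma iter_Phi_dist n d d' k : 0 <= k -> (forall x y, `|d x y - d' x y| <= k) ->
  forall x y, `|iter n (Phi beta) d x y - iter n (Phi beta) d' x y| <= k / 2 ^+ n.
Proof.
move=> k0 dd; elim: n => [|n IH] x y /=; first by rewrite expr0 divr1.
by rewrite exprSr invfM mulrA; apply: Phi_dist => //; rewrite divr_ge0 // exprn_ge0.
Qed.

Lemma Phi_fixpoint_unique d d' : is_pmetric d -> is_pmetric d' ->
  Phi beta d = d -> Phi beta d' = d' -> d = d'.
Proof.
move=> dP d'P dfix d'fix; apply/funext => x; apply/funext => y.
apply: (eq_of_dist_le_pow2 (c := 1)) => n.
rewrite -(iter_fix n dfix) -(iter_fix n d'fix).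
exact/iter_Phi_dist/pmetric_dist_le1.
Qed.

Lemma discrete_pmetric : is_pmetric (@discrete_pm R X).
Proof.
rewrite /discrete_pm; split=> [x y|x|x y|x y z].
- by case: pselect; rewrite /= lexx ler01.
- by case: pselect.
- by do 2 case: pselect => ? //=; congruence.
repeat (case: pselect => ? /=; subst); try congruence; lra.
Qed.

Lemma Phi_iter_pmetric i : is_pmetric (Pi i).
Proof. by elim: i => [|i IH]; [exact: discrete_pmetric | exact: Phi_pmetric]. Qed.

Lemma Phi_discrete_le x y : Phi beta (@discrete_pm R X) x y <= @discrete_pm R X x y.
Proof.
have [Phi01 Phi0 _ _] := Phi_pmetric discrete_pmetric.
rewrite {2}/discrete_pm; case: pselect => [xy|_] /=; last by case/andP: (Phi01 x y).
by rewrite -xy Phi0.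
Qed.

Lemma Phi_iter_antitone x y :
  {homo (fun i => Pi i x y) : i j / (i <= j)%N >-> j <= i}.
Proof.
apply: (homo_leq (r := fun u v => v <= u)) => [u|u v w vu wv|i].
- exact: lexx.
- exact: le_trans wv vu.
by elim: i x y => [|i IH] x y; [exact: Phi_discrete_le | exact: Phi_le].
Qed.

Lemma Phi_iter_dist i j x y : (i <= j)%N -> `|Pi j x y - Pi i x y| <= 1 / 2 ^+ i.
Proof.
move=> /subnKC <-; rewrite /Phi_iter iterD.
exact/iter_Phi_dist/pmetric_dist_le1/discrete_pmetric/Phi_iter_pmetric.
Qed.

Definition Phi_lim (x y : X) : R := inf (range (fun i => Pi i x y)).

Lemma Phi_lim_le i x y : Phi_lim x y <= Pi i x y.
Proof.
apply: ge_inf; last by exists i.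
by exists 0 => _ [j _ <-]; exact: pmetric_ge0 (Phi_iter_pmetric j) x y.
Qed.

Lemma Phi_lim_ge0 x y : 0 <= Phi_lim x y.
Proof.
apply: lb_le_inf; first by exists (Pi 0 x y), 0%N.
by move=> _ [j _ <-]; exact: pmetric_ge0 (Phi_iter_pmetric j) x y.
Qed.

Lemma Phi_iter_le_lim i x y : Pi i x y <= Phi_lim x y + 1 / 2 ^+ i.
Proof.
rewrite -lerBlDr; apply: lb_le_inf; first by exists (Pi 0 x y), 0%N.
move=> _ [j _ <-].
have := Phi_iter_dist x y (leq_maxl i j); rewrite ler_distl => /andP[le_i _].
have := Phi_iter_antitone x y (leq_maxr i j); lra.
Qed.

Lemma Phi_lim_dist i x y : `|Pi i x y - Phi_lim x y| <= 1 / 2 ^+ i.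
Proof.
have := Phi_lim_le i x y; have := Phi_iter_le_lim i x y.
have : 0 <= 1 / 2 ^+ i :> R by rewrite divr_ge0 // exprn_ge0.
by rewrite ler_distl => *; apply/andP; split; lra.
Qed.

Lemma Phi_lim_fix : Phi beta Phi_lim = Phi_lim.
Proof.
apply/funext => x; apply/funext => y; apply: (eq_of_dist_le_pow2 (c := 1)) => n.
have e0 : 0 <= 1 / 2 ^+ n :> R by rewrite divr_ge0 // exprn_ge0.
have eS : 1 / 2 ^+ n.+1 = 1 / 2 ^+ n / 2 :> R by rewrite exprSr invfM mulrA.
have Phi_close : `|Phi beta Phi_lim x y - Pi n.+1 x y| <= 1 / 2 ^+ n / 2.
  by apply: Phi_dist => // u v; rewrite distrC Phi_lim_dist.
have := Phi_lim_dist n.+1 x y.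
by have := ler_distD (Pi n.+1 x y) (Phi beta Phi_lim x y) (Phi_lim x y); lra.
Qed.

Lemma Phi_lim_pmetric : is_pmetric Phi_lim.
Proof.
split=> [x y|x|x y|x y z].
- rewrite Phi_lim_ge0 (le_trans (Phi_lim_le 0 x y)) //.
  exact: pmetric_le1 (Phi_iter_pmetric 0) x y.
- apply/eqP; rewrite eq_le Phi_lim_ge0 andbT.
  by have [_ Pi0 _ _] := Phi_iter_pmetric 0; rewrite -(Pi0 x) Phi_lim_le.
- rewrite /Phi_lim (_ : (fun i => Pi i x y) = (fun i => Pi i y x)) //.
  by apply/funext => i; have [_ _ -> _] := Phi_iter_pmetric i.
apply: (le_of_le_addr_pow2 (c := 2)) => n.
have [_ _ _ tri] := Phi_iter_pmetric n.
have := Phi_lim_le n x z; have := Phi_iter_le_lim n x y; have := Phi_iter_le_lim n y z.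
have := tri x y z; have -> : 2 / 2 ^+ n = 1 / 2 ^+ n + 1 / 2 ^+ n :> R by rewrite -mulrDl.
lra.
Qed.

End Iteration.

Theorem mainTheorem5 (R : realType) (Sigma X : Type) (beta : prechart Sigma X) :
  locally_finite beta ->
  (exists bd : X -> X -> R, is_bd beta bd) /\
  (forall bd : X -> X -> R, is_bd beta bd ->
     forall x y : X, bd x y = inf (range (fun i : nat => @Phi_iter R Sigma X beta i x y))).
Proof.
move=> _; pose L := Phi_lim R beta.
have lim_unique (d : X -> X -> R) : is_pmetric d -> Phi beta d = d -> d = L.
  move=> dP dfix.
  exact: Phi_fixpoint_unique dP (Phi_lim_pmetric R beta) dfix (Phi_lim_fix R beta).
split; last by move=> bd [bdP bdfix _]; rewrite (lim_unique bd).
exists L; split; [exact: Phi_lim_pmetric | exact: Phi_lim_fix |].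
by move=> d dP dfix x y; rewrite (lim_unique d).
Qed.
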